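(* Under a general RLCM with $J\times K$ binary $Q$-matrix $Q$, if $(Q,\boldsymbol\Theta,\boldsymbol p)$ are jointly generically identifiable then $Q$ is generically complete, i.e. $Q$ has $K$ rows which, after a permutation of these rows and of the columns, form a $K\times K$ matrix all of whose diagonal entries equal $1$.
   Context: A $Q$-matrix is a $J\times K$ binary matrix with rows $\boldsymbol q_j$. For $\boldsymbol\alpha,\boldsymbol q\in\{0,1\}^K$, $\boldsymbol\alpha\succeq\boldsymbol q$ means $\alpha_k\ge q_k$ for all $k$; $\odot$ is the elementwise product. RLCM: latent $\boldsymbol A\in\{0,1\}^K$ with $P(\boldsymbol A=\boldsymbol\alpha)=p_{\boldsymbol\alpha}>0$, $\sum p_{\boldsymbol\alpha}=1$; given $\boldsymbol A=\boldsymbol\alpha$, responses $R_1,\dots,R_J\in\{0,1\}$ independent with $P(R_j=1\mid\boldsymbol\alpha)=\theta_{j,\boldsymbol\alpha}$, $\boldsymbol\Theta=(\theta_{j,\boldsymbol\alpha})$; constraints: $\theta_{j,\boldsymbol\alpha}=\theta_{j,\boldsymbol\alpha'}$ if $\boldsymbol\alpha\odot\boldsymbol q_j=\boldsymbol\alpha'\odot\boldsymbol q_j$, and $\theta_{j,\boldsymbol\alpha}>\theta_{j,\boldsymbol\alpha'}$ if $\boldsymbol\alpha\succeq\boldsymbol q_j$, $\boldsymbol\alpha'\not\succeq\boldsymbol q_j$. In a general RLCM (e.g. GDINA: $\theta_{j,\boldsymbol\alpha}=\sum_{S\subseteq\{k:q_{j,k}=1\}}\beta_{j,S}\prod_{k\in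 S}\alpha_k$), apart from these constraints the item parameters are free (all main and interaction effects of required attributes); the parameter space is full-dimensional in $\mathbb R^m$. $(\bar Q,\bar{\boldsymbol\Theta},\bar{\boldsymbol p})\sim(Q,\boldsymbol\Theta,\boldsymbol p)$ means $\bar Q$ equals $Q$ up to column permutation and parameters coincide (after relabeling attributes). Joint generic identifiability: the set of $(\boldsymbol\Theta,\boldsymbol p)$ for which some $(\bar Q,\bar{\boldsymbol\Theta},\bar{\boldsymbol p})\not\sim(Q,\boldsymbol\Theta,\boldsymbol p)$ ($\bar Q$ any $J\times K$ binary matrix, valid parameters) gives the same distribution of $\boldsymbol R$ has Lebesgue measure zero in the parameter space. *)

From HB Require Import structures.
From mathcomp Require Import all_boot all_order all_algebra all_fingroup.
From mathcomp Require Import reals.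
Set Implicit Arguments. Unset Strict Implicit. Unset Printing Implicit Defensive.
Import Order.TTheory GRing.Theory Num.Theory.
Local Open Scope ring_scope.

Definition att (K : nat) := {ffun 'I_K -> bool}.

Definition att0 (K : nat) : att K := [ffun => false].

Definition succeq K (a q : att K) : bool := [forall k, q k ==> a k].

Definition odot K (a q : att K) : att K := [ffun k => a k && q k].

Definition qrow J K (Q : 'M[bool]_(J, K)) (j : 'I_J) : att K := [ffun k => Q j k].

(* (Theta, p) are valid RLCM parameters for the Q-matrix Q (general RLCM:
   no constraints beyond the RLCM ones). *)
Definition valid_params (R : realType) J K (Q : 'M[bool]_(J, K))
    (theta : 'I_J -> att K -> R) (p : att K -> R) : Prop :=
  [/\ (forall a, 0 < p a),
      \sum_(a : att K) p a = 1,
      (forall j a, 0 <= theta j a <= 1),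
      (forall j a a', odot a (qrow Q j) = odot a' (qrow Q j) ->
                      theta j a = theta j a') &
      (forall j a a', succeq a (qrow Q j) -> ~~ succeq a' (qrow Q j) ->
                      theta j a' < theta j a)].

Definition resp_dist (R : realType) J K (theta : 'I_J -> att K -> R)
    (p : att K -> R) (r : {ffun 'I_J -> bool}) : R :=
  \sum_(a : att K) p a *
     \prod_(j < J) (if r j then theta j a else 1 - theta j a).

Definition model_equiv (R : realType) J K (Q Qb : 'M[bool]_(J, K))
    (theta thetab : 'I_J -> att K -> R) (p pb : att K -> R) : Prop :=
  exists s : {perm 'I_K},
    [/\ (forall j k, Qb j k = Q j (s k)),
        (forall a : att K, pb [ffun k => a (s k)] = p a) &
        (forall j (a : att K), thetab j [ffun k => a (s k)] = theta j a)].

(* Free coordinates of the (full-dimensional) parameter space of a general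
   RLCM: theta_{j,alpha} for alpha \preceq q_j (i.e. one value for each
   pattern alpha \odot q_j), and p_alpha for alpha <> 0
   (p_0 = 1 - sum of the others). *)
Definition coord (J K : nat) : finType := (('I_J * att K) + att K)%type.

Definition coord_dom J K (Q : 'M[bool]_(J, K)) (i : coord J K) : bool :=
  match i with
  | inl (j, a) => succeq (qrow Q j) a
  | inr a => a != att0 K
  end.

Definition theta_of (R : realType) J K (Q : 'M[bool]_(J, K))
    (c : coord J K -> R) : 'I_J -> att K -> R :=
  fun j a => c (inl (j, odot a (qrow Q j))).

Definition p_of (R : realType) J K (c : coord J K -> R) : att K -> R :=
  fun a => if a == att0 K then 1 - \sum_(b : att K | b != att0 K) c (inr b)
           else c (inr a).

(* Lebesgue-null subset of R^dom (coordinates outside dom are ignored):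
   for every eps > 0 it is covered by countably many boxes of total
   volume at most eps. *)
Definition lebesgue_null (R : realType) (T : finType) (dom : pred T)
    (N : (T -> R) -> Prop) : Prop :=
  forall eps : R, 0 < eps ->
    exists (lo hi : nat -> T -> R),
      [/\ (forall n i, lo n i <= hi n i),
          (forall m, \sum_(n < m) \prod_(i | dom i) (hi n i - lo n i) <= eps) &
          (forall c, N c -> exists n, forall i, dom i -> lo n i <= c i <= hi n i)].

Definition jointly_generically_identifiable (R : realType) J K
    (Q : 'M[bool]_(J, K)) : Prop :=
  lebesgue_null (coord_dom Q)
    (fun c : coord J K -> R =>
       valid_params Q (theta_of Q c) (p_of c) /\
       exists (Qb : 'M[bool]_(J, K)) (thetab : 'I_J -> att K -> R)
              (pb : att K -> R),
         [/\ valid_params Qb thetab pb,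
             (forall r, resp_dist thetab pb r = resp_dist (theta_of Q c) (p_of c) r) &
             ~ model_equiv Q Qb (theta_of Q c) thetab (p_of c) pb]).

Definition generically_complete J K (Q : 'M[bool]_(J, K)) : Prop :=
  exists f : 'I_K -> 'I_J, injective f /\
  exists s t : {perm 'I_K}, forall i : 'I_K, Q (f (t i)) (s i).

From HB Require Import structures.
From mathcomp Require Import all_boot all_order all_algebra all_fingroup.
From mathcomp Require Import all_classical all_reals all_analysis.
From mathcomp Require Import measurable_realfun zify lra ring.
Import mathcomp.boot.fintype mathcomp.boot.finset.
Set Implicit Arguments. Unset Strict Implicit. Unset Printing Implicit Defensive.
Import Order.TTheory GRing.Theory Num.Theory.

(* If Q is not generically complete, Hall's marriage theorem yields a set S of
   attributes required by fewer than |S| items, the set N(S).  The 2^|S|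
   profiles supported on S outnumber the 2^|N(S)| response patterns of N(S),
   and the items outside N(S) do not see S, so p can be moved along a nonzero
   direction d that leaves the distribution of R unchanged.  A relabelling of
   the attributes only permutes the p_alpha and so preserves sum p_alpha^2,
   which a suitable small move changes.  Hence every valid parameter is
   non-identifiable, while the valid parameters contain a box of positive
   volume, which no Lebesgue-null set can contain. *)

Section HallMarriage.
(* [w0] is only the value of a matching outside its domain. *)
Variables (C W : finType) (q : W -> C -> bool) (w0 : W).
Implicit Types (Rs X Y : {set W}) (Cs A B S T : {set C}).

Definition nbr (Rs : {set W}) (S : {set C}) : {set W} :=
  [set j in Rs | [exists k in S, q j k]].

Definition hall_cond (Cs : {set C}) (Rs : {set W}) : Prop :=
  forall S : {set C}, S \subset Cs -> #|S| <= #|nbr Rs S|.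

Definition matching (Cs : {set C}) (Rs : {set W}) : Prop :=
  exists g : C -> W, [/\ {in Cs &, injective g},
    {in Cs, forall k, g k \in Rs} & {in Cs, forall k, q (g k) k}].

Lemma nbr_subset Rs S : nbr Rs S \subset Rs.
Proof. by apply/subsetP => j; rewrite inE => /andP[]. Qed.

Lemma nbrU Rs S T : nbr Rs (S :|: T) = nbr Rs S :|: nbr Rs T.
Proof.
apply/setP => j; rewrite !inE -andb_orr; congr (_ && _).
apply/existsP/orP => [[k /andP[/setUP[kS|kT] qjk]]|[]/existsP[k /andP[kX qjk]]].
- by left; apply/existsP; exists k; rewrite kS.
- by right; apply/existsP; exists k; rewrite kT.
- by exists k; rewrite inE kX.
- by exists k; rewrite inE kX orbT.
Qed.

Lemma nbrD Rs X S : nbr (Rs :\: X) S = nbr Rs S :\: X.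
Proof. by apply/setP => j; rewrite !inE andbA. Qed.

Lemma nbr_nbr Rs S T : T \subset S -> nbr (nbr Rs S) T = nbr Rs T.
Proof.
move=> sTS; apply/setP => j; rewrite !inE -andbA.
case: (boolP [exists k in T, q j k]) => [|_]; last by rewrite !andbF.
case/existsP => k /andP[kT qjk]; rewrite !andbT andb_idr // => _.
by apply/existsP; exists k; rewrite (subsetP sTS).
Qed.

Lemma matching0 Rs : matching set0 Rs.
Proof. by exists (fun=> w0); split=> k; rewrite inE. Qed.

Lemma matching1 k j : q j k -> matching [set k] [set j].
Proof.
move=> qjk; exists (fun=> j); split=> [k1 k2|k'|k'].
- by rewrite !inE => /eqP-> /eqP->.
- by rewrite !inE.
- by rewrite inE => /eqP->.
Qed.

Lemma matchingU A B X Y : [disjoint X & Y] ->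
  matching A X -> matching B Y -> matching (A :|: B) (X :|: Y).
Proof.
move=> dXY [g [gI gX qg]] [h [hI hY qh]].
have gh k k' : k \in A -> k' \in B -> g k <> h k'.
  by move=> kA k'B ghk; move: dXY => /disjointFr/(_ (gX k kA)); rewrite ghk hY.
exists (fun k => if k \in A then g k else h k); split.
- move=> k k'; rewrite !inE.
  case: ifP => kA; case: ifP => k'A //= kB k'B; first exact: gI.
  + by move/gh; rewrite kA k'B => /(_ isT isT).
  + by move/esym/gh; rewrite k'A kB => /(_ isT isT).
  + exact: hI.
- by move=> k; rewrite !inE; case: ifP => [kA _|_ kB]; rewrite ?gX ?hY ?orbT.
- by move=> k; rewrite inE; case: ifP => [kA _|_ kB]; [apply: qg | apply: qh].
Qed.

Lemma hall_condS Cs Rs S :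
  hall_cond Cs Rs -> S \subset Cs -> hall_cond S (nbr Rs S).
Proof. by move=> hall sSC T sTS; rewrite nbr_nbr // hall // (subset_trans sTS). Qed.

Lemma hall_cond_tight Cs Rs S : hall_cond Cs Rs -> S \subset Cs ->
  #|nbr Rs S| <= #|S| -> hall_cond (Cs :\: S) (Rs :\: nbr Rs S).
Proof.
move=> hall sSC tight T sTC.
have /andP[sTCs dTS] : (T \subset Cs) && [disjoint T & S] by rewrite -subsetD.
have := hall (T :|: S); rewrite subUset sTCs sSC nbrD => /(_ isT).
have := cardsUI T S; rewrite (disjoint_setI0 dTS) cards0 nbrU.
have := cardsUI (nbr Rs T) (nbr Rs S); have := cardsID (nbr Rs S) (nbr Rs T).
lia.
Qed.

Lemma hall_cond_surplus Cs Rs k0 j0 :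
  (forall S, S \subset Cs :\ k0 -> S != set0 -> #|S| < #|nbr Rs S|) ->
  hall_cond (Cs :\ k0) (Rs :\ j0).
Proof.
move=> surplus S sSC; have [->|S0] := eqVneq S set0; first by rewrite cards0.
have := surplus S sSC S0; rewrite nbrD (cardsD1 j0 (nbr Rs S)).
by case: (j0 \in nbr Rs S); rewrite /= ?add0n ?add1n // => /ltnW.
Qed.

(* Either some nonempty proper S is tight and Cs splits at S, or every such S
   has a surplus and any edge (k0, j0) can be removed. *)
Theorem hall_marriage Cs Rs : hall_cond Cs Rs -> matching Cs Rs.
Proof.
have [n] := ubnP #|Cs|; elim: n => // n IH in Cs Rs *; rewrite ltnS => leCn hall.
have [->|[k0 k0C]] := set_0Vmem Cs; first exact: matching0.
case: (boolP [exists S : {set C},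
    [&& S \subset Cs, S != set0, S != Cs & #|nbr Rs S| <= #|S|]]).
  case/existsP => S /and4P[sSC S0 SC tight].
  have <- : S :|: (Cs :\: S) = Cs by rewrite -{1}(setIidPr sSC) setID.
  have <- : nbr Rs S :|: (Rs :\: nbr Rs S) = Rs.
    by rewrite -{1}(setIidPr (nbr_subset Rs S)) setID.
  apply: matchingU.
  - by rewrite disjoint_sym disjoints_subset subDset setUCr subsetT.
  - apply: IH (hall_condS hall sSC).
    by rewrite (leq_trans _ leCn) // proper_card // properEneq SC.
  - apply: IH (hall_cond_tight hall sSC tight).
    rewrite (leq_trans _ leCn) // cardsDS // ltn_subrL !card_gt0 S0.
    by apply/set0Pn; exists k0.
rewrite negb_exists => /forallP notight.
have /card_gt0P[j0] : 0 < #|nbr Rs [set k0]|.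
  by apply: leq_trans (hall _ _); rewrite ?cards1 ?sub1set.
rewrite inE => /andP[j0R /existsP[k /andP[/set1P-> qj0]]].
rewrite -(setD1K k0C) -(setD1K j0R).
apply: matchingU; [by rewrite disjoints1 !inE eqxx | exact: matching1 |].
apply: IH; first by rewrite (cardsD1 k0) k0C in leCn.
apply: hall_cond_surplus => S sSC S0; rewrite ltnNge.
have := notight S; rewrite (subset_trans sSC (subsetDl _ _)) S0 /=.
suff -> : S != Cs by [].
by apply: contraTneq sSC => ->; apply/subsetPn; exists k0; rewrite ?inE ?eqxx.
Qed.

End HallMarriage.

Local Open Scope ring_scope.

Lemma underdetermined_nonzero_solution (F : fieldType) (X Y : finType)
    (A : {set X}) (B : {set Y}) (h : X -> Y -> F) : (#|B| < #|A|)%N ->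
  exists d : X -> F, [/\ exists x, d x != 0,
    forall x, x \notin A -> d x = 0 &
    forall y, y \in B -> \sum_x d x * h x y = 0].
Proof.
move=> ltBA.
pose M : 'M[F]_(#|A|, #|B|) := \matrix_(i, j) h (enum_val i) (enum_val j).
have : kermx M != 0.
  by rewrite -mxrank_eq0 mxrank_ker -lt0n subn_gt0 (leq_ltn_trans (rank_leq_col M)).
case/matrix0Pn => i0 [k0 nz_ker].
pose v := row i0 (kermx M).
have x0A : enum_val k0 \in A by exact: enum_valP.
pose d x := if x \in A then v 0 (enum_rank_in x0A x) else 0.
have dE i : d (enum_val i) = v 0 i by rewrite /d enum_valP enum_valK_in.
have d_out x : x \notin A -> d x = 0 by rewrite /d => /negbTE->.
exists d; split => //; first by exists (enum_val k0); rewrite dE mxE.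
move=> y yB; rewrite (bigID (mem A)) /= [X in _ + X]big1 ?addr0; last first.
  by move=> x /d_out->; rewrite mul0r.
transitivity ((v *m M) 0 (enum_rank_in yB y)); last first.
  by rewrite /v -row_mul mulmx_ker row0 mxE.
rewrite mxE big_enum_val /=; apply: eq_bigr => i _.
by rewrite dE !mxE enum_rankK_in.
Qed.

Lemma sum_prod_bernoulli (R : comPzRingType) (I : finType) (t : I -> R) :
  \sum_(r : {ffun I -> bool}) \prod_i (if r i then t i else 1 - t i) = 1.
Proof.
rewrite -(bigA_distr_bigA (fun i b => if b then t i else 1 - t i)) /=.
by rewrite big1 // => i _; rewrite big_bool /= addrC subrK.
Qed.

Lemma small_perturbation_pos (R : realFieldType) (T : finType) (p d : T -> R) :
  (forall a, 0 < p a) ->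
  exists2 e0, 0 < e0 & forall e, 0 <= e <= e0 -> forall a, 0 < p a + e * d a.
Proof.
move=> p_gt0; pose Sg := \sum_a `|d a| / p a.
have Sg_ge0 : 0 <= Sg by apply: sumr_ge0 => a _; rewrite divr_ge0 // ltW.
exists (1 + Sg)^-1 => [|e /andP[e_ge0 e_le] a]; first by rewrite invr_gt0; lra.
have d_le : `|d a| <= Sg * p a.
  rewrite -ler_pdivrMr // /Sg (bigD1 a) //= lerDl.
  by apply: sumr_ge0 => b _; rewrite divr_ge0 // ltW.
have Sg_lt : Sg / (1 + Sg) < 1 by rewrite ltr_pdivrMr; lra.
have := ler_pM e_ge0 (normr_ge0 _) e_le d_le.
have := ler_wpM2l e_ge0 (lerNnormlW (lexx `|d a|)).
have := p_gt0 a; move: Sg_lt; rewrite mulrC; nra.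
Qed.

Lemma exists_perturbation_sum_sqr (R : realFieldType) (T : finType)
    (p d : T -> R) (x0 : T) : (forall a, 0 < p a) -> d x0 != 0 ->
  exists e, [/\ forall a, 0 < p a + e * d a &
                \sum_a (p a + e * d a) ^+ 2 != \sum_a p a ^+ 2].
Proof.
move=> p_gt0 dx0; have [e0 e0_gt0 pos] := small_perturbation_pos d p_gt0.
(* The change e (2 L + e Sq) of the sum of squares vanishes for one e > 0 at most. *)
pose L := \sum_a p a * d a; pose Sq := \sum_a d a ^+ 2.
have Sq_gt0 : 0 < Sq.
  rewrite /Sq (bigD1 x0) //= ltr_pwDl ?sqr_ge0 ?sumr_ge0 // => [|a _].
    by rewrite lt_def sqrf_eq0 dx0 sqr_ge0.
  by rewrite sqr_ge0.
have sum_sqr e :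
    \sum_a (p a + e * d a) ^+ 2 = \sum_a p a ^+ 2 + e * (2 * L + e * Sq).
  transitivity (\sum_a (p a ^+ 2 + e * (2 * (p a * d a) + e * d a ^+ 2))).
    by apply: eq_bigr => a _; ring.
  by rewrite big_split /= -mulr_sumr big_split /= -!mulr_sumr.
suff [e [e_gt0 e_le nz]] : exists e, [/\ 0 < e, e <= e0 & 2 * L + e * Sq != 0].
  exists e; split; first by apply: pos; rewrite ltW.
  by rewrite sum_sqr -subr_eq0 addrAC subrr add0r mulf_eq0 negb_or gt_eqF.
have [root_e0|] := eqVneq (2 * L + e0 * Sq) 0; last by exists e0.
exists (e0 / 2); split; rewrite ?divr_gt0 ?ler_pdivrMr //; try lra.
apply/eqP => root_half; have : e0 * Sq = 0 by lra.
by apply/eqP; rewrite mulf_neq0 ?gt_eqF.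
Qed.

Section BoxCover.
Variable R : realType.
Local Open Scope ereal_scope.

Lemma nneseries_le_bound (u : nat -> R) (B : R) : (forall n, 0 <= u n)%R ->
  (forall m, \sum_(n < m) u n <= B)%R -> \sum_(n <oo) (u n)%:E <= B%:E.
Proof.
move=> u_ge0 uB; apply: lime_le.
  by apply: is_cvg_nneseries => n _ _; rewrite lee_fin.
by apply: nearW => m; rewrite /= sumEFin lee_fin big_mkord.
Qed.

Lemma nneseries_ge_term (u : nat -> R) n : (forall n, 0 <= u n)%R ->
  (u n)%:E <= \sum_(n <oo) (u n)%:E.
Proof.
move=> u_ge0; rewrite (nneseriesD1 (n := n)) // => [|k _]; last by rewrite lee_fin.
by apply: leeDl; apply: nneseries_ge0 => k _; rewrite lee_fin.
Qed.

Lemma lebesgue_measure_itv_cc (l h : R) : (l <= h)%R ->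
  lebesgue_measure `[l, h]%classic = (h - l)%:E.
Proof.
rewrite lebesgue_measure_itv /= lte_fin le_eqVlt => /predU1P[->|->//].
by rewrite ltxx subrr.
Qed.

(* Integrate the covering inequality over [a, b]. *)
Lemma weighted_interval_cover (a b C : R) (lo hi w : nat -> R) :
  (0 <= C)%R -> (a <= b)%R ->
  (forall n, lo n <= hi n)%R -> (forall n, 0 <= w n)%R ->
  (forall y, (a <= y <= b)%R ->
     C%:E <= \sum_(n <oo) (w n * \1_`[lo n, hi n]%classic y)%:E) ->
  (C * (b - a))%:E <= \sum_(n <oo) (w n * (hi n - lo n))%:E.
Proof.
move=> C_ge0 ab lohi w_ge0 cover; pose D : set R := `[a, b]%classic.
have mD : measurable D by exact: measurable_itv.
pose f n x := (w n * \1_`[lo n, hi n]%classic x)%R.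
have f_ge0 n x : 0 <= (f n x)%:E by rewrite lee_fin mulr_ge0.
have mf n : measurable_fun D (EFin \o f n).
  by apply/measurable_EFinP; apply: measurable_funM.
rewrite EFinM -lebesgue_measure_itv_cc // -integral_cst //.
apply: (@le_trans _ _ (\int[lebesgue_measure]_(x in D) \sum_(n <oo) (f n x)%:E)).
  apply: ge0_le_integral => //.
  by apply: (@ge0_emeasurable_sum _ _ _ D (fun n x => (f n x)%:E) xpredT)
    => [k x _ _|k _]; [exact: f_ge0 | exact: mf].
rewrite integral_nneseries //; apply: lee_nneseries => [n _ _|n _].
  by apply: integral_ge0 => x _.
under eq_integral do rewrite EFinM.
rewrite ge0_integralZl_EFin // ?integral_indic //; last first.
  by apply/measurable_EFinP; exact: measurable_indic.
rewrite EFinM lee_wpmul2l ?lee_fin // -lebesgue_measure_itv_cc //.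
by apply: le_measure => //; apply/mem_set => //; apply: measurableI.
Qed.

Definition box_vol (T : finType) (D : {set T}) (lo hi : T -> R) : R :=
  \prod_(i in D) (hi i - lo i).

Definition box_indic (T : finType) (D : {set T}) (lo hi x : T -> R) : R :=
  \prod_(i in D) \1_`[lo i, hi i]%classic (x i).

(* Induction on the coordinates in D: freezing coordinate i0 at y turns the
   weights into w n * 1_[lo n i0, hi n i0] y. *)
Lemma weighted_box_cover (T : finType) (D : {set T}) (a b : T -> R)
    (lo hi : nat -> T -> R) (w : nat -> R) :
  (forall i, a i <= b i)%R -> (forall n i, lo n i <= hi n i)%R ->
  (forall n, 0 <= w n)%R ->
  (forall x, (forall i, i \in D -> a i <= x i <= b i)%R ->
     1 <= \sum_(n <oo) (w n * box_indic D (lo n) (hi n) x)%:E) ->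
  (box_vol D a b)%:E <= \sum_(n <oo) (w n * box_vol D (lo n) (hi n))%:E.
Proof.
move=> ab lohi; move Dk: #|D| => k.
elim: k D Dk w => [|k IH] D Dk w w_ge0 cover.
  move/eqP: Dk; rewrite cards_eq0 => /eqP D0; subst D.
  have -> : \sum_(n <oo) (w n * box_vol set0 (lo n) (hi n))%:E =
            \sum_(n <oo) (w n * box_indic set0 (lo n) (hi n) (fun=> 0%R))%:E.
    by apply: eq_eseriesr => n _; rewrite /box_vol /box_indic !big_set0.
  by rewrite /box_vol big_set0; apply: cover => i; rewrite inE.
have [i0 i0D] : exists i0, i0 \in D by apply/set0Pn; rewrite -card_gt0 Dk.
have D'k : #|D :\ i0| = k by move: Dk; rewrite (cardsD1 i0) i0D add1n => -[].
have volE l h : box_vol D l h = ((h i0 - l i0) * box_vol (D :\ i0) l h)%R.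
  by rewrite /box_vol (big_setD1 i0).
have indE l h x : box_indic D l h x =
    (\1_`[l i0, h i0]%classic (x i0) * box_indic (D :\ i0) l h x)%R.
  by rewrite /box_indic (big_setD1 i0).
have vol_ge0 l h : (forall i, l i <= h i)%R -> (0 <= box_vol (D :\ i0) l h)%R.
  by move=> lh; apply: prodr_ge0 => i _; rewrite subr_ge0.
rewrite volE mulrC; under eq_eseriesr do rewrite volE mulrCA mulrC.
apply: (weighted_interval_cover (lo := fun n => lo n i0) (hi := fun n => hi n i0))
  => [||n|n|y y_ab]; rewrite ?mulr_ge0 ?vol_ge0 //.
under eq_eseriesr do rewrite mulrAC.
apply: IH => // [n|x x_box]; first by rewrite mulr_ge0.
pose x' i := if i == i0 then y else x i.
have x'E n : box_indic D (lo n) (hi n) x' =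
    (\1_`[lo n i0, hi n i0]%classic y * box_indic (D :\ i0) (lo n) (hi n) x)%R.
  rewrite indE /x' eqxx; congr (_ * _)%R; apply: eq_bigr => i.
  by rewrite !inE => /andP[/negbTE-> _].
have := cover x'; under eq_eseriesr do rewrite x'E mulrA.
apply=> i iD; rewrite /x'; case: eqP => [->|/eqP i_neq] //.
by apply: x_box; rewrite !inE i_neq.
Qed.

Lemma lebesgue_null_contains_no_box (T : finType) (dom : pred T)
    (N : (T -> R) -> Prop) (a b : T -> R) :
  lebesgue_null dom N -> (forall i, a i < b i)%R ->
  ~ (forall c, (forall i, dom i -> a i <= c i <= b i)%R -> N c).
Proof.
move=> null ab box_N; pose D := [set i | dom i].
have V_gt0 : (0 < box_vol D a b)%R by apply: prodr_gt0 => i _; rewrite subr_gt0.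
have [lo [hi [lohi vol_le cover]]] := null _ (divr_gt0 V_gt0 (ltr0Sn _ 1)).
have vol_ge0 n : (0 <= 1 * box_vol D (lo n) (hi n))%R.
  by rewrite mul1r; apply: prodr_ge0 => i _; rewrite subr_ge0.
have vol_sum m : (\sum_(n < m) 1 * box_vol D (lo n) (hi n) <= box_vol D a b / 2)%R.
  have volE n : box_vol D (lo n) (hi n) = (\prod_(i | dom i) (hi n i - lo n i))%R.
    by apply: eq_bigl => i; rewrite inE.
  by under eq_bigr do rewrite mul1r volE; exact: vol_le.
have cover1 x : (forall i, i \in D -> a i <= x i <= b i)%R ->
    1 <= \sum_(n <oo) (1 * box_indic D (lo n) (hi n) x)%:E.
  move=> x_box.
  have [n x_n] := cover x (box_N x (fun i di => x_box i ltac:(by rewrite inE))).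
  apply: le_trans (nneseries_ge_term n _); last first.
    by move=> k; rewrite mul1r; apply: prodr_ge0 => i _; rewrite indicE ler0n.
  rewrite mul1r lee_fin /box_indic big1 // => i; rewrite inE => di.
  by rewrite indicE mem_setE in_itv /= x_n.
have := weighted_box_cover (fun i => ltW (ab i)) lohi (fun=> ler01) cover1.
move/le_trans/(_ (nneseries_le_bound vol_ge0 vol_sum)); rewrite lee_fin; lra.
Qed.

End BoxCover.

Lemma sum_resp_dist (R : realType) J K (theta : 'I_J -> att K -> R)
    (p : att K -> R) :
  \sum_r resp_dist theta p r = \sum_a p a.
Proof.
rewrite exchange_big; apply: eq_bigr => a _.
by rewrite -mulr_sumr sum_prod_bernoulli mulr1.
Qed.

Lemma resp_distDZ (R : realType) J K (theta : 'I_J -> att K -> R)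
    (p d : att K -> R) e r :
  resp_dist theta (fun a => p a + e * d a) r =
  resp_dist theta p r + e * resp_dist theta d r.
Proof.
rewrite /resp_dist mulr_sumr -big_split; apply: eq_bigr => a _.
by rewrite mulrDl mulrA.
Qed.

Lemma model_equiv_sum (R : realType) J K (Q Qb : 'M[bool]_(J, K))
    (theta thetab : 'I_J -> att K -> R) (p pb : att K -> R) (F : R -> R) :
  model_equiv Q Qb theta thetab p pb -> \sum_a F (pb a) = \sum_a F (p a).
Proof.
case=> s [_ pbE _].
rewrite (reindex (fun a : att K => [ffun k => a (s k)])) /=.
  by apply: eq_bigr => a _; rewrite pbE.
by exists (fun a : att K => [ffun k => a ((s^-1)%g k)]) => a _;
  apply/ffunP => k; rewrite !ffunE ?permK ?permKV.
Qed.

Section HallViolation.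
Variables (R : realType) (J K : nat) (Q : 'M[bool]_(J, K)).
Variables (theta : 'I_J -> att K -> R) (S : {set 'I_K}).
Hypothesis theta_odot : forall j a a',
  odot a (qrow Q j) = odot a' (qrow Q j) -> theta j a = theta j a'.
Hypothesis lt_nbr : (#|nbr Q setT S| < #|S|)%N.

Let AS := [set a : att K in pffun_on false S predT].
Let NS := nbr Q setT S.
Let RS := [set r : {ffun 'I_J -> bool} in pffun_on false NS predT].

Lemma theta_nbrC j a : a \in AS -> j \notin NS -> theta j a = theta j (att0 K).
Proof.
rewrite inE => /pffun_onP[/supportP a_supp _] jNS.
apply: theta_odot; apply/ffunP => k; rewrite !ffunE /=.
case: (boolP (k \in S)) => [kS|/a_supp-> //]; case Qjk: (Q j k); rewrite ?andbF //.
move: jNS; rewrite !inE; apply: contraNeq => _.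
by apply/existsP; exists k; rewrite kS Qjk.
Qed.

(* For a supported on S, the probability of a response pattern factors into a
   term for the items of N(S) and a term that does not depend on a. *)
Lemma exists_resp_dist_null : exists d : att K -> R,
  (exists a, d a != 0) /\ forall r, resp_dist theta d r = 0.
Proof.
pose bern (r : {ffun 'I_J -> bool}) j a := if r j then theta j a else 1 - theta j a.
pose h a r := \prod_(j in NS) bern r j a.
have card_AS : #|AS| = (2 ^ #|S|)%N by rewrite cardsE card_pffun_on card_bool.
have card_RS : #|RS| = (2 ^ #|NS|)%N by rewrite cardsE card_pffun_on card_bool.
have [|d [d_nz d_out d_ker]] :=
    underdetermined_nonzero_solution h (A := AS) (B := RS).
  by rewrite card_AS card_RS ltn_exp2l.
exists d; split => // r.
pose r' : {ffun 'I_J -> bool} := [ffun j => (j \in NS) && r j].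
have r'RS : r' \in RS.
  rewrite inE; apply/pffun_onP; split=> //.
  by apply/supportP => j /negbTE jNS; rewrite ffunE jNS.
pose c := \prod_(j | j \notin NS) bern r j (att0 K).
transitivity (\sum_a d a * h a r' * c); last by rewrite -mulr_suml d_ker // mul0r.
apply: eq_bigr => a _; have [aAS|/d_out->] := boolP (a \in AS); last by rewrite !mul0r.
rewrite -mulrA (bigID (mem NS)) /=; congr (_ * (_ * _)).
  by apply: eq_bigr => j jNS; rewrite /bern ffunE jNS.
by apply: eq_bigr => j jNS; rewrite /bern theta_nbrC.
Qed.

End HallViolation.

Lemma hall_violation_not_identifiable (R : realType) J K (Q : 'M[bool]_(J, K))
    (theta : 'I_J -> att K -> R) (p : att K -> R) (S : {set 'I_K}) :
  (#|nbr Q setT S| < #|S|)%N -> valid_params Q theta p ->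
  exists pb, [/\ valid_params Q theta pb,
    forall r, resp_dist theta pb r = resp_dist theta p r &
    ~ model_equiv Q Q theta theta p pb].
Proof.
move=> lt_nbr [p_gt0 p_sum theta01 theta_odot theta_mono].
have [d [[a0 da0] d_null]] := exists_resp_dist_null theta_odot lt_nbr.
have d_sum : \sum_a d a = 0 by rewrite -(sum_resp_dist theta) big1.
have [e [pb_gt0 pb_sqr]] := exists_perturbation_sum_sqr p_gt0 da0.
exists (fun a => p a + e * d a); split.
- split=> //; by rewrite big_split /= -mulr_sumr d_sum mulr0 addr0.
- by move=> r; rewrite resp_distDZ d_null mulr0 addr0.
- by move/(model_equiv_sum (fun x => x ^+ 2))/eqP; apply/negP.
Qed.

Lemma succeq_odot K (a q : att K) : succeq q (odot a q).
Proof. by apply/forallP => k; rewrite ffunE; apply/implyP => /andP[]. Qed.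

Lemma succeq_odotE K (a q : att K) : succeq a q = (odot a q == q).
Proof.
apply/forallP/eqP => [qa|aq k].
  by apply/ffunP => k; have := qa k; rewrite ffunE; case: (q k); case: (a k).
have := congr1 (fun g : att K => g k) aq; rewrite /= ffunE.
by case: (q k); case: (a k).
Qed.

(* Item parameters of the mastery class in [3/4, 1] and of the other classes in
   [0, 1/4] make the monotonicity constraint automatic; class probabilities in
   [u, 2u] with u = 1 / (4 2^K) leave p_0 >= 1/2. *)
Definition box_lo (R : realType) J K (Q : 'M[bool]_(J, K)) (i : coord J K) : R :=
  match i with
  | inl (j, a) => if a == qrow Q j then 3 / 4 else 0
  | inr _ => (4 * #|att K|%:R)^-1
  end.

Definition box_hi (R : realType) J K (Q : 'M[bool]_(J, K)) (i : coord J K) : R :=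
  match i with
  | inl (j, a) => if a == qrow Q j then 1 else 1 / 4
  | inr _ => 2 * (4 * #|att K|%:R)^-1
  end.

Lemma box_lo_lt_hi (R : realType) J K (Q : 'M[bool]_(J, K)) i :
  box_lo R Q i < box_hi R Q i.
Proof.
case: i => [[j a]|a] /=; first by case: ifP => _; lra.
have : 0 < (4 * #|att K|%:R : R)^-1.
  by rewrite invr_gt0 mulr_gt0 // ltr0n; apply/card_gt0P; exists (att0 K).
lra.
Qed.

Lemma valid_params_box (R : realType) J K (Q : 'M[bool]_(J, K))
    (c : coord J K -> R) :
  (forall i, coord_dom Q i -> box_lo R Q i <= c i <= box_hi R Q i) ->
  valid_params Q (theta_of Q c) (p_of c).
Proof.
move=> c_box; pose N : R := #|att K|%:R; pose u := (4 * N)^-1.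
have N_gt0 : 0 < N by rewrite ltr0n; apply/card_gt0P; exists (att0 K).
have u_gt0 : 0 < u by rewrite invr_gt0 mulr_gt0.
have theta_box j a : [/\ 0 <= theta_of Q c j a <= 1,
    odot a (qrow Q j) == qrow Q j -> 3 / 4 <= theta_of Q c j a &
    odot a (qrow Q j) != qrow Q j -> theta_of Q c j a <= 1 / 4].
  have := c_box (inl (j, odot a (qrow Q j))) (succeq_odot _ _).
  rewrite /theta_of /=.
  by case: eqP => _ /andP[lo hi]; split=> //; apply/andP; split; lra.
have p_box b : b != att0 K -> u <= c (inr b) <= 2 * u by move/(c_box (inr b)).
split.
- move=> a; rewrite /p_of; case: ifP => [_|/negbT/p_box/andP[+ _]]; last by lra.
  have le_sum : \sum_(b | b != att0 K) c (inr b) <= \sum_(b | b != att0 K) 2 * u.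
    by apply: ler_sum => b /p_box/andP[].
  have le_sumT : \sum_(b | b != att0 K) 2 * u <= \sum_(b : att K) 2 * u.
    by rewrite [X in _ <= X](bigD1 (att0 K)) //= lerDr; lra.
  have sumT : \sum_(b : att K) 2 * u = 1 / 2.
    by rewrite sumr_const -mulr_natr /u -/N; field; rewrite gt_eqF.
  lra.
- rewrite (bigD1 (att0 K)) //= {1}/p_of eqxx.
  rewrite [X in _ + X](eq_bigr (fun b => c (inr b))) ?subrK // => b /negbTE.
  by rewrite /p_of => ->.
- by move=> j a; case: (theta_box j a).
- by move=> j a a' aa'; rewrite /theta_of aa'.
- move=> j a a'; rewrite !succeq_odotE => qa qa'.
  case: (theta_box j a) => _ /(_ qa) theta_a_ge _.
  by case: (theta_box j a') => _ _ /(_ qa') theta_a'_le; lra.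
Qed.

Lemma generically_complete_of_hall J K (Q : 'M[bool]_(J, K)) :
  hall_cond Q setT setT -> generically_complete Q.
Proof.
case: K Q => [|K] Q hall.
  have f0 : 'I_0 -> 'I_J by case.
  by exists f0; split; [case | exists 1%g, 1%g; case].
have w0 : 'I_J.
  have := leq_trans (hall setT (subxx _)) (max_card _).
  by rewrite cardsT !card_ord; case: J {Q hall} => // J _; exact: ord0.
have [f [f_inj _ Qf]] := hall_marriage w0 hall.
exists f; split=> [i i'|]; first by apply: f_inj; rewrite inE.
by exists 1%g, 1%g => i; rewrite !perm1 Qf ?inE.
Qed.

Theorem theorem5 (R : realType) (J K : nat) (Q : 'M[bool]_(J, K)) :
  jointly_generically_identifiable R Q -> generically_complete Q.
Proof.
move=> gen_id; apply: generically_complete_of_hall => S _; rewrite leqNgt.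
apply/negP => lt_nbr.
apply: (lebesgue_null_contains_no_box gen_id (box_lo_lt_hi R Q)) => c c_box.
have valid_c := valid_params_box c_box.
have [pb [valid_pb same_dist not_equiv]] :=
  hall_violation_not_identifiable lt_nbr valid_c.
by split=> //; exists Q, (theta_of Q c), pb.
Qed.
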